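(* The algebra $\mathtt{A}_5^{\{3,4\}}$ is wild.
   Context: $\Bbbk$ is an algebraically closed field; arrows compose right to left. $\mathtt{A}_n$ is the algebra of the quiver with vertices $1,\dots,n$, arrows $a_i:i\to i+1$, $b_i:i+1\to i$ ($1\le i\le n-1$), relations $a_ib_i=b_{i+1}a_{i+1}$ ($1\le i\le n-2$), $a_{n-1}b_{n-1}=0$. For $X\subset\{2,\dots,n\}$, $e_X$ is the sum of primitive idempotents for vertices in $\{1\}\cup X$ and $\mathtt{A}_n^X=e_X\mathtt{A}_ne_X$. *)

From HB Require Import structures.
From mathcomp Require Import all_boot all_order all_algebra.
From mathcomp Require Import mxtens.
Set Implicit Arguments. Unset Strict Implicit. Unset Printing Implicit Defensive.
Import GRing.Theory.
Local Open Scope ring_scope.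

(* The quiver Q_n: vertices 1..n, arrows a_i : i -> i+1, b_i : i+1 -> i.    *)
Inductive arr := Aa of nat | Bb of nat.

Definition src (x : arr) : nat := match x with Aa i => i | Bb i => i.+1 end.
Definition tgt (x : arr) : nat := match x with Aa i => i.+1 | Bb i => i end.
Definition arr_ok (n : nat) (x : arr) : bool :=
  match x with Aa i | Bb i => (1 <= i) && (i <= n.-1) end%N.

(* A path is a pair (v, w): starting vertex v and the list w of arrows in the
   order in which they are TRAVERSED (first arrow first).  In the paper's
   right-to-left notation the path (v, [:: x1; x2; ...; xm]) is xm ... x2 x1;
   (v, [::]) is the trivial path e_v. *)
Definition path := (nat * seq arr)%type.

Fixpoint walk (n v : nat) (w : seq arr) : bool :=
  match w with
  | [::] => (1 <= v <= n)%N
  | x :: w' => (src x == v) && arr_ok n x && walk n (tgt x) w'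
  end.

Definition is_path (n : nat) (p : path) : bool := walk n p.1 p.2.
Definition pstart (p : path) : nat := p.1.
Definition pend (p : path) : nat := last p.1 (map tgt p.2).
(* "first p, then q" = the product q p in the algebra *)
Definition pcat (p q : path) : path := (p.1, p.2 ++ q.2).

(* paths of e_X kQ_n e_X : both endpoints in {1} u X *)
Definition Spath (n : nat) (X : seq nat) (p : path) : bool :=
  is_path n p && (pstart p \in 1%N :: X) && (pend p \in 1%N :: X).

(* Unital algebra homomorphisms  A_n^X = e_X (kQ_n / I) e_X  -> T, where T  *)
(* is described by an equality, a product, a sum, 0 and 1.  The paths in     *)
(* Spath form a basis of e_X kQ_n e_X (multiplication = concatenation or 0,  *)
(* unit = sum of e_v, v in {1} u X), and e_X I e_X is spanned by the         *)
(* elements u r w (u, w paths, r a defining relation) with endpoints in      *)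
(* {1} u X; so a linear map given on paths is a unital algebra morphism       *)
(* from A_n^X iff the following hold.                                        *)
(*  relations: a_i b_i = b_{i+1} a_{i+1} (1 <= i <= n-2), a_{n-1} b_{n-1}=0. *)
(*  In traversal order a_i b_i = [:: Bb i; Aa i], b_{i+1}a_{i+1} =           *)
(*  [:: Aa i.+1; Bb i.+1], a_{n-1}b_{n-1} = [:: Bb n.-1; Aa n.-1].           *)
Definition is_rep_AnX {T : Type} (eqT : T -> T -> Prop) (mulT addT : T -> T -> T)
    (zeroT oneT : T) (n : nat) (X : seq nat) (rho : path -> T) : Prop :=
  [/\ eqT (foldr (fun v acc => addT (rho (v, [::])) acc) zeroT (1%N :: X)) oneT,
      (forall p q, Spath n X p -> Spath n X q -> pend p = pstart q ->
          eqT (rho (pcat p q)) (mulT (rho q) (rho p))),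
      (forall p q, Spath n X p -> Spath n X q -> pend p <> pstart q ->
          eqT (mulT (rho q) (rho p)) zeroT),
      (forall (i s : nat) (u w : seq arr), (1 <= i <= n - 2)%N ->
          Spath n X (s, u ++ [:: Bb i; Aa i] ++ w) ->
          eqT (rho (s, u ++ [:: Bb i; Aa i] ++ w))
              (rho (s, u ++ [:: Aa i.+1; Bb i.+1] ++ w)))
    & (forall (s : nat) (u w : seq arr),
          Spath n X (s, u ++ [:: Bb n.-1; Aa n.-1] ++ w) ->
          eqT (rho (s, u ++ [:: Bb n.-1; Aa n.-1] ++ w)) zeroT)].

(* Finite-dimensional A_n^X-modules: k^d with the action of each path given  *)
(* by a d x d matrix (acting on column vectors).                             *)
Section Modules.
Variable k : fieldType.

Definition mod_iso (n : nat) (X : seq nat) (d d' : nat)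
    (rho : path -> 'M[k]_d) (rho' : path -> 'M[k]_d') : Prop :=
  exists (P : 'M[k]_(d', d)) (Q : 'M[k]_(d, d')),
    [/\ P *m Q = 1%:M, Q *m P = 1%:M &
        forall p, Spath n X p -> P *m rho p = rho' p *m P].

Definition mod_indec (n : nat) (X : seq nat) (d : nat) (rho : path -> 'M[k]_d)
  : Prop :=
  (0 < d)%N /\
  forall E : 'M[k]_d, (forall p, Spath n X p -> E *m rho p = rho p *m E) ->
    E *m E = E -> E = 0 \/ E = 1%:M.

(* finite-dimensional k<x,y>-modules: k^m with two m x m matrices *)
Definition kxy_iso (m m' : nat) (X Y : 'M[k]_m) (X' Y' : 'M[k]_m') : Prop :=
  exists (P : 'M[k]_(m', m)) (Q : 'M[k]_(m, m')),
    [/\ P *m Q = 1%:M, Q *m P = 1%:M, P *m X = X' *m P & P *m Y = Y' *m P].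

Definition kxy_indec (m : nat) (X Y : 'M[k]_m) : Prop :=
  (0 < m)%N /\
  forall E : 'M[k]_m, E *m X = X *m E -> E *m Y = Y *m E ->
    E *m E = E -> E = 0 \/ E = 1%:M.

(* The free algebra k<x,y>: an element is a finite formal sum of terms       *)
(* c * w, with w a word in x (false) and y (true).  Two such sums are equal  *)
(* in k<x,y> iff all their word-coefficients agree.                          *)
Definition ncpoly := seq (k * seq bool)%type.
Definition nccoef (P : ncpoly) (w : seq bool) : k :=
  \sum_(t <- P | t.2 == w) t.1.
Definition nceq (P Q : ncpoly) : Prop := forall w, nccoef P w = nccoef Q w.
Definition ncadd (P Q : ncpoly) : ncpoly := P ++ Q.
Definition ncmul (P Q : ncpoly) : ncpoly :=
  [seq (t.1 * s.1, t.2 ++ s.2) | t <- P, s <- Q].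
Definition nczero : ncpoly := [::].
Definition ncone : ncpoly := [:: (1, [::])].

Definition ncmx_eq r (A B : 'M[ncpoly]_r) : Prop := forall i j, nceq (A i j) (B i j).
Definition ncmx_add r (A B : 'M[ncpoly]_r) : 'M[ncpoly]_r :=
  \matrix_(i, j) ncadd (A i j) (B i j).
Definition ncmx_mul r (A B : 'M[ncpoly]_r) : 'M[ncpoly]_r :=
  \matrix_(i, j) flatten [seq ncmul (A i l) (B l j) | l <- enum 'I_r].
Definition ncmx_zero r : 'M[ncpoly]_r := \matrix_(i, j) nczero.
Definition ncmx_one r : 'M[ncpoly]_r :=
  \matrix_(i, j) (if i == j then ncone else nczero).

Definition ev_word m (X Y : 'M[k]_m) (w : seq bool) : 'M[k]_m :=
  foldr (fun (l : bool) M => (if l then Y else X) *m M) 1%:M w.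
Definition ev_nc m (X Y : 'M[k]_m) (P : ncpoly) : 'M[k]_m :=
  \sum_(t <- P) t.1 *: ev_word X Y t.2.

(* A bimodule  M = k<x,y>^r  (free of rank r as right k<x,y>-module) with    *)
(* left A_n^X-action Phi : A_n^X -> M_r(k<x,y>) ; the functor M (x) - sends  *)
(* (k^m, X, Y) to k^r (x) k^m = k^(r*m), on which a path p acts by the block  *)
(* matrix ( Phi(p)_{ij}(X,Y) )_{i,j}.                                         *)
Definition tensor_act (r m : nat) (Phi : path -> 'M[ncpoly]_r) (X Y : 'M[k]_m)
    (p : path) : 'M[k]_(r * m) :=
  \matrix_(i, j) ev_nc X Y (Phi p (mxtens_unindex i).1 (mxtens_unindex j).1)
                    (mxtens_unindex i).2 (mxtens_unindex j).2.

(* Wildness (standard definition, e.g. Drozd; Simson-Skowronski): there is an *)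
(* A-k<x,y>-bimodule M, finitely generated and free as a right k<x,y>-module, *)
(* such that M (x)_{k<x,y>} - : mod k<x,y> -> mod A preserves                 *)
(* indecomposability and reflects isomorphism classes.                        *)
Definition wild_AnX (n : nat) (X : seq nat) : Prop :=
  exists (r : nat) (Phi : path -> 'M[ncpoly]_r),
    [/\ is_rep_AnX (@ncmx_eq r) (@ncmx_mul r) (@ncmx_add r) (ncmx_zero r)
          (ncmx_one r) n X Phi,
        (forall m (X0 Y0 : 'M[k]_m), kxy_indec X0 Y0 ->
            mod_indec n X (tensor_act Phi X0 Y0))
      & (forall m m' (X0 Y0 : 'M[k]_m) (X1 Y1 : 'M[k]_m'),
            mod_iso n X (tensor_act Phi X0 Y0) (tensor_act Phi X1 Y1) ->
            kxy_iso X0 Y0 X1 Y1)].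

End Modules.

From Pilot Require Import Defs.
From mathcomp Require Import all_boot all_order all_algebra mxtens.
Set Implicit Arguments. Unset Strict Implicit. Unset Printing Implicit Defensive.
Import GRing.Theory.
Local Open Scope ring_scope.

(* The bimodule is k<x,y>^11, on which a path of A_5^{3,4} acts by a matrix
   C + A x + B y with 0/1 matrices C, A, B; the variables enter only through the
   arrow a_2.  For a k<x,y>-module (k^m, X, Y), view a homomorphism P between
   the induced modules as an 11 x 11 matrix of m x m blocks.  Commuting with the
   vertex idempotents and with eight explicit paths forces P to be "scalar plus
   radical": all diagonal blocks equal P_00, which intertwines X and Y, and the
   remaining nonzero blocks lie at positions no two of which compose.  Hence an
   idempotent endomorphism is 0 or 1 according as its block P_00 is, and an
   isomorphism of induced modules restricts to the isomorphism P_00 of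
   k<x,y>-modules. *)

Lemma big_pred1_uniq (V : nmodType) (I : eqType) (r : seq I) (F : I -> V) j :
  uniq r -> \sum_(l <- r | l == j) F l = if j \in r then F j else 0.
Proof.
move=> ur; rewrite -big_filter; case: ifP => jr; first by rewrite filter_pred1_uniq ?big_seq1.
by rewrite big1_seq // => l /=; rewrite mem_filter => /andP [/eqP-> ]; rewrite jr.
Qed.

(** * Matrices with natural entries, computably *)

Section NatTables.
Variables (R : pzRingType) (n : nat).

Definition ntab := nat -> nat -> nat.

Definition ntab_mx (f : ntab) : 'M[R]_n := \matrix_(i, j) (f i j)%:R.
Definition ntab_sum (F : nat -> nat) : nat :=
  foldr (fun l s => F l + s)%N 0%N (iota 0 n).
Definition ntab_mul (f g : ntab) : ntab :=
  fun i j => ntab_sum (fun l => f i l * g l j)%N.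
Definition ntab_add (f g : ntab) : ntab := fun i j => (f i j + g i j)%N.
Definition ntab0 : ntab := fun _ _ => 0%N.
Definition ntab_of (s : seq (nat * nat)) : ntab := fun i j => (i, j) \in s.
Definition ntab_eqb (f g : ntab) : bool :=
  all (fun i => all (fun j => f i j == g i j) (iota 0 n)) (iota 0 n).

(* Tabulating a table once keeps nested products from being re-evaluated
   exponentially often under [vm_compute]. *)
Definition ntab_memo (f : ntab) : ntab :=
  let t := [seq [seq f i j | j <- iota 0 n] | i <- iota 0 n] in
  fun i j => nth 0%N (nth [::] t i) j.

Lemma ntab_sumE F : (ntab_sum F)%:R = \sum_(l < n) (F l)%:R :> R.
Proof.
rewrite -(big_mkord xpredT (fun l => (F l)%:R)) /index_iota subn0 /ntab_sum.
by elim: (iota 0 n) => [|l s IH]; rewrite ?big_nil ?big_cons //= natrD IH.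
Qed.

Lemma ntab_mxM f g : ntab_mx f *m ntab_mx g = ntab_mx (ntab_mul f g).
Proof.
apply/matrixP => i j; rewrite !mxE ntab_sumE.
by apply: eq_bigr => l _; rewrite !mxE natrM.
Qed.

Lemma ntab_mxD f g : ntab_mx f + ntab_mx g = ntab_mx (ntab_add f g).
Proof. by apply/matrixP => i j; rewrite !mxE natrD. Qed.

Lemma ntab_mx0 : ntab_mx ntab0 = 0.
Proof. by apply/matrixP => i j; rewrite !mxE. Qed.

Lemma ntab_mx1 : ntab_mx (ntab_of [seq (i, i) | i <- iota 0 n]) = 1%:M.
Proof.
apply/matrixP => i j; rewrite !mxE /ntab_of; congr (nat_of_bool _)%:R.
apply/mapP/eqP => [[l _ [il jl]]| ->]; first by apply: val_inj; rewrite /= il jl.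
by exists (j : nat); rewrite ?mem_iota ?add0n ?ltn_ord.
Qed.

Lemma ntab_eqbP f g : ntab_eqb f g -> ntab_mx f = ntab_mx g.
Proof.
move=> /allP fg; apply/matrixP => i j; rewrite !mxE.
have iota_ord (l : 'I_n) : (l : nat) \in iota 0 n by rewrite mem_iota add0n ltn_ord.
by have /allP fgi := fg i (iota_ord i); rewrite (eqP (fgi j (iota_ord j))).
Qed.

Lemma ntab_memoE f : ntab_mx (ntab_memo f) = ntab_mx f.
Proof.
apply/matrixP => i j; rewrite !mxE /ntab_memo.
by rewrite (nth_map 0%N) ?size_iota // (nth_map 0%N) ?size_iota // !nth_iota.
Qed.

Lemma sum_ntab_of_col (V : lmodType R) (F : nat -> V) s j :
    uniq s -> all (fun x => x.1 < n)%N s ->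
  \sum_(l < n) (ntab_of s l j)%:R *: F l = \sum_(x <- s | x.2 == j) F x.1.
Proof.
elim: s => [|[a b] s IH] /=.
  by move=> _ _; rewrite big_nil big1 // => l _; rewrite scale0r.
case/andP => abs us /andP [an sn]; rewrite big_cons -IH //=.
have split_cons l : (ntab_of ((a, b) :: s) l j)%:R *: F l =
    ((l, j) == (a, b))%:R *: F l + (ntab_of s l j)%:R *: F l.
  rewrite /ntab_of in_cons -scalerDl -natrD.
  by case: eqP => [[-> ->]|]; rewrite ?(negbTE abs).
rewrite (eq_bigr _ (fun (l : 'I_n) _ => split_cons l)) big_split /=.
rewrite (bigD1 (Ordinal an)) //= big1 => [|l /negbTE la]; last first.
  by rewrite xpair_eqE (_ : (l == a :> nat) = false) ?scale0r.
rewrite xpair_eqE eqxx addr0 eq_sym.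
by case: eqP; rewrite ?scale1r ?scale0r ?add0r.
Qed.

Lemma sum_ntab_of_row (V : lmodType R) (F : nat -> V) s i :
    uniq s -> all (fun x => x.2 < n)%N s ->
  \sum_(l < n) (ntab_of s i l)%:R *: F l = \sum_(x <- s | x.1 == i) F x.2.
Proof.
move=> us sn; pose swap (x : nat * nat) := (x.2, x.1).
have swapK : involutive swap by case.
rewrite (eq_bigr (fun l : 'I_n => (ntab_of (map swap s) l i)%:R *: F l)).
  by rewrite sum_ntab_of_col ?big_map ?map_inj_uniq ?all_map //; exact: inv_inj.
by move=> l _; rewrite /ntab_of -[(l : nat, i)]/(swap (i, l : nat)) mem_map //; exact: inv_inj.
Qed.

End NatTables.

Arguments ntab_mx {R n} f.

(** * Pencils C + A x + B y *)

Section Pencils.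
Variables (R : pzRingType) (n : nat).

(* [Pencil C A B] stands for C + A x + B y, multiplied modulo the terms of
   degree 2 in the variables x and y. *)
Record pencil := Pencil { pc : 'M[R]_n; px : 'M[R]_n; py : 'M[R]_n }.

Definition pencil_mul (t u : pencil) : pencil :=
  Pencil (pc t *m pc u) (pc t *m px u + px t *m pc u)
         (pc t *m py u + py t *m pc u).
Definition pencil_add (t u : pencil) : pencil :=
  Pencil (pc t + pc u) (px t + px u) (py t + py u).
Definition pencil1 : pencil := Pencil 1%:M 0 0.
Definition pencil0 : pencil := Pencil 0 0 0.

Lemma pencil_mulA : associative pencil_mul.
Proof.
move=> [c a b] [c' a' b'] [c'' a'' b'']; rewrite /pencil_mul /= !mulmxA.
by congr Pencil; rewrite !mulmxDr !mulmxDl !mulmxA addrA.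
Qed.

Lemma pencil_mul1p : left_id pencil1 pencil_mul.
Proof. by case=> c a b; rewrite /pencil_mul /= !mul1mx !mul0mx !addr0. Qed.

Lemma pencil_mulp1 : right_id pencil1 pencil_mul.
Proof. by case=> c a b; rewrite /pencil_mul /= !mulmx1 !mulmx0 !add0r. Qed.

Lemma pencil_mul0p : left_zero pencil0 pencil_mul.
Proof. by case=> c a b; rewrite /pencil_mul /= !mul0mx !addr0. Qed.

Lemma pencil_mulp0 : right_zero pencil0 pencil_mul.
Proof. by case=> c a b; rewrite /pencil_mul /= !mulmx0 !addr0. Qed.

Variable L : 'M[R]_n.
Hypothesis LL : L *m L = L.

(* The linear parts map into the image of the idempotent L and vanish on it,
   while the constant part stabilises it; so no product of such pencils ever
   produces a term of degree 2. *)
Definition adapted (t : pencil) : Prop :=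
  [/\ L *m px t = px t, px t *m L = 0, L *m py t = py t, py t *m L = 0
    & L *m pc t *m L = pc t *m L].

Lemma adapted1 : adapted pencil1.
Proof. by split; rewrite /= ?mulmx0 ?mul0mx // mulmx1 mul1mx LL. Qed.

Lemma adapted_mul t u : adapted t -> adapted u -> adapted (pencil_mul t u).
Proof.
case: t u => [c a b] [c' a' b'] [/= La aL Lb bL Lc] [/= La' aL' Lb' bL' Lc'].
split => /=.
- by rewrite mulmxDr !mulmxA La -La' !mulmxA Lc.
- by rewrite mulmxDl -!mulmxA aL' mulmx0 add0r -Lc' !mulmxA aL !mul0mx.
- by rewrite mulmxDr !mulmxA Lb -Lb' !mulmxA Lc.
- by rewrite mulmxDl -!mulmxA bL' mulmx0 add0r -Lc' !mulmxA bL !mul0mx.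
- by rewrite -!mulmxA -Lc' !mulmxA -Lc.
Qed.

Lemma adapted_quadratic t u : adapted t -> adapted u ->
  [/\ px t *m px u = 0, px t *m py u = 0, py t *m px u = 0 & py t *m py u = 0].
Proof.
case=> _ aL _ bL _ [La _ Lb _ _].
by rewrite -La -Lb !mulmxA aL bL !mul0mx.
Qed.

End Pencils.

Section TabPencils.
Variables (R : pzRingType) (n : nat).

Record tpencil := TPencil { tc : ntab; tx : ntab; ty : ntab }.

Definition tpencil_val (x : tpencil) : pencil R n :=
  Pencil (ntab_mx (tc x)) (ntab_mx (tx x)) (ntab_mx (ty x)).

Definition tpencil_mul (x y : tpencil) : tpencil :=
  TPencil (ntab_memo n (ntab_mul n (tc x) (tc y)))
    (ntab_memo n (ntab_add (ntab_mul n (tc x) (tx y)) (ntab_mul n (tx x) (tc y))))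
    (ntab_memo n (ntab_add (ntab_mul n (tc x) (ty y)) (ntab_mul n (ty x) (tc y)))).
Definition tpencil_add (x y : tpencil) : tpencil :=
  TPencil (ntab_add (tc x) (tc y)) (ntab_add (tx x) (tx y)) (ntab_add (ty x) (ty y)).
Definition tpencil_eqb (x y : tpencil) : bool :=
  [&& ntab_eqb n (tc x) (tc y), ntab_eqb n (tx x) (tx y) & ntab_eqb n (ty x) (ty y)].
Definition scalar_tab (s : seq (nat * nat)) : tpencil := TPencil (ntab_of s) ntab0 ntab0.
Definition tpencil0 : tpencil := TPencil ntab0 ntab0 ntab0.
Definition tpencil1 : tpencil := scalar_tab [seq (i, i) | i <- iota 0 n].

Lemma tpencil_valM x y :
  pencil_mul (tpencil_val x) (tpencil_val y) = tpencil_val (tpencil_mul x y).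
Proof. by rewrite /pencil_mul /tpencil_val /= !ntab_memoE !ntab_mxM !ntab_mxD. Qed.

Lemma tpencil_valD x y :
  pencil_add (tpencil_val x) (tpencil_val y) = tpencil_val (tpencil_add x y).
Proof. by rewrite /pencil_add /tpencil_val /= !ntab_mxD. Qed.

Lemma tpencil_eqbP x y : tpencil_eqb x y -> tpencil_val x = tpencil_val y.
Proof.
case/and3P => /(ntab_eqbP R) E1 /(ntab_eqbP R) E2 /(ntab_eqbP R) E3.
by rewrite /tpencil_val E1 E2 E3.
Qed.

Lemma tpencil_val0 : tpencil_val tpencil0 = pencil0 R n.
Proof. by rewrite /tpencil_val /= ntab_mx0. Qed.

Lemma tpencil_val1 : tpencil_val tpencil1 = pencil1 R n.
Proof. by rewrite /tpencil_val /= ntab_mx1 ntab_mx0. Qed.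

Definition tadapted (l : ntab) (x : tpencil) : bool :=
  [&& ntab_eqb n (ntab_mul n l (tx x)) (tx x), ntab_eqb n (ntab_mul n (tx x) l) ntab0,
      ntab_eqb n (ntab_mul n l (ty x)) (ty x), ntab_eqb n (ntab_mul n (ty x) l) ntab0
    & ntab_eqb n (ntab_mul n (ntab_mul n l (tc x)) l) (ntab_mul n (tc x) l)].

Lemma tadaptedP l x : tadapted l x -> adapted (ntab_mx l) (tpencil_val x).
Proof.
case/and5P => /(ntab_eqbP R) E1 /(ntab_eqbP R) E2 /(ntab_eqbP R) E3
  /(ntab_eqbP R) E4 /(ntab_eqbP R) E5.
by split; rewrite /= ?ntab_mxM ?E1 ?E2 ?E3 ?E4 ?E5 ?ntab_mx0.
Qed.

End TabPencils.

Section FreeAlgebra.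
Variable k : fieldType.

Lemma nccoef_nil w : nccoef (nil : ncpoly k) w = 0.
Proof. by rewrite /nccoef big_nil. Qed.

Lemma nccoef_cons (t : k * seq bool) P w :
  nccoef (t :: P) w = (if t.2 == w then t.1 else 0) + nccoef P w.
Proof. by rewrite /nccoef big_cons; case: ifP; rewrite ?add0r. Qed.

Lemma nccoef_cat (P Q : ncpoly k) w : nccoef (P ++ Q) w = nccoef P w + nccoef Q w.
Proof. by rewrite /nccoef big_cat. Qed.

Lemma nccoef_flatten (T : Type) (F : T -> ncpoly k) s w :
  nccoef (flatten [seq F l | l <- s]) w = \sum_(l <- s) nccoef (F l) w.
Proof.
elim: s => [|l s IH] /=; first by rewrite big_nil nccoef_nil.
by rewrite nccoef_cat IH big_cons.
Qed.

Variable n : nat.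

Lemma nccoef_ncmx_add (A B : 'M[ncpoly k]_n) i j w :
  nccoef (ncmx_add A B i j) w = nccoef (A i j) w + nccoef (B i j) w.
Proof. by rewrite mxE nccoef_cat. Qed.

Lemma nccoef_ncmx_zero i j w : nccoef (ncmx_zero k n i j) w = 0.
Proof. by rewrite mxE nccoef_nil. Qed.

Definition pencil_nc (t : pencil k n) : 'M[ncpoly k]_n :=
  \matrix_(i, j) [:: (pc t i j, [::]); (px t i j, [:: false]); (py t i j, [:: true])].

Definition pencil_coef (t : pencil k n) (w : seq bool) : 'M[k]_n :=
  if w == [::] then pc t else if w == [:: false] then px t
  else if w == [:: true] then py t else 0.

Lemma pencil_coef0 w : pencil_coef (pencil0 k n) w = 0.
Proof. by rewrite /pencil_coef /= !if_same. Qed.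

Lemma pencil_coefD t u w :
  pencil_coef (pencil_add t u) w = pencil_coef t w + pencil_coef u w.
Proof. by rewrite /pencil_coef; do 3 case: ifP => _ //; rewrite addr0. Qed.

Lemma nccoef_pencil_nc t i j w : nccoef (pencil_nc t i j) w = pencil_coef t w i j.
Proof.
rewrite mxE !nccoef_cons nccoef_nil /pencil_coef /= !(eq_sym _ w).
by case: w => [|[] [|? ?]] /=; rewrite ?mxE ?(addr0, add0r).
Qed.

Lemma nccoef_ncmx_one i j w : nccoef (ncmx_one k n i j) w = pencil_coef (pencil1 k n) w i j.
Proof.
rewrite /pencil_coef !if_same !mxE.
case: (w =P [::]) => [->|/eqP nw]; rewrite !mxE; case: (i == j);
  by rewrite ?nccoef_cons nccoef_nil //= ?addr0 // eq_sym (negbTE nw).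
Qed.

Lemma nccoef_pencil_nc_mul (L : 'M[k]_n) t u i j w :
    adapted L t -> adapted L u ->
  nccoef (ncmx_mul (pencil_nc t) (pencil_nc u) i j) w =
  pencil_coef (pencil_mul t u) w i j.
Proof.
move=> Lt Lu; have [XX XY YX YY] := adapted_quadratic Lt Lu.
rewrite mxE nccoef_flatten big_enum /=.
under eq_bigr => l _ do rewrite /ncmul !mxE /= !nccoef_cons nccoef_nil.
have mulE (M N : 'M[k]_n) : \sum_(l in 'I_n) M i l * N l j = (M *m N) i j.
  by rewrite mxE.
rewrite /pencil_coef /=.
case: w => [|[] [|[] [|? ?]]] /=; under eq_bigr => l _ do rewrite ?(addr0, add0r);
  by rewrite ?big_split ?mulE ?XX ?XY ?YX ?YY ?(mxE, big1_eq).
Qed.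

Lemma ev_pencil_nc m (X Y : 'M[k]_m) t i j :
  ev_nc X Y (pencil_nc t i j) = pc t i j *: 1%:M + px t i j *: X + py t i j *: Y.
Proof. by rewrite /ev_nc mxE !big_cons big_nil /= addr0 /ev_word /= !mulmx1 addrA. Qed.

End FreeAlgebra.

(** * Block matrices *)

Section Blocks.
Variables (R : pzRingType) (r : nat).

Definition blk m m' (P : 'M[R]_(r.+1 * m', r.+1 * m)) (i j : nat) : 'M[R]_(m', m) :=
  \matrix_(s, t) P (mxtens_index (inord i, s)) (mxtens_index (inord j, t)).

Lemma blk_ext m m' (A B : 'M[R]_(r.+1 * m', r.+1 * m)) :
  (forall i j, (i < r.+1)%N -> (j < r.+1)%N -> blk A i j = blk B i j) -> A = B.
Proof.
move=> AB; apply/matrixP => x y.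
rewrite -[x](mxtens_unindexK x) -[y](mxtens_unindexK y).
case: (mxtens_unindex x) (mxtens_unindex y) => [i s] [j t].
have /matrixP/(_ s t) := AB i j (ltn_ord i) (ltn_ord j).
by rewrite !mxE !inord_val.
Qed.

Lemma blk_mul a b c (M : 'M[R]_(r.+1 * a, r.+1 * b)) (N : 'M[R]_(r.+1 * b, r.+1 * c)) i j :
  blk (M *m N) i j = \sum_(l < r.+1) blk M i l *m blk N l j.
Proof.
apply/matrixP => s t; rewrite !mxE summxE.
rewrite (reindex (@mxtens_index r.+1 b)) /=; last first.
  by exists (@mxtens_unindex r.+1 b) => x _; rewrite ?mxtens_indexK ?mxtens_unindexK.
pose G (l : 'I_r.+1) (u : 'I_b) := M (mxtens_index (inord i, s)) (mxtens_index (l, u))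
  * N (mxtens_index (l, u)) (mxtens_index (inord j, t)).
rewrite (eq_bigr (fun x => G x.1 x.2)); last by case.
rewrite -pair_bigA /=; apply: eq_bigr => l _; rewrite !mxE.
by apply: eq_bigr => u _; rewrite !mxE inord_val.
Qed.

Lemma blkB m m' (A B : 'M[R]_(r.+1 * m', r.+1 * m)) i j :
  blk (A - B) i j = blk A i j - blk B i j.
Proof. by apply/matrixP => s t; rewrite !mxE. Qed.

Lemma blk0 m m' i j : blk (0 : 'M[R]_(r.+1 * m', r.+1 * m)) i j = 0.
Proof. by apply/matrixP => s t; rewrite !mxE. Qed.

Lemma blk1 m i j : (i < r.+1)%N -> (j < r.+1)%N ->
  blk (1%:M : 'M[R]_(r.+1 * m)) i j = if i == j then 1%:M else 0.
Proof.
move=> ir jr; apply/matrixP => s t; rewrite !mxE.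
rewrite (inj_eq (can_inj (@mxtens_indexK r.+1 m))) xpair_eqE.
have -> : (inord i == inord j :> 'I_r.+1) = (i == j).
  by apply/eqP/eqP => [/(congr1 val) /=|->]; rewrite ?(inordK ir) ?(inordK jr).
by case: (i == j); rewrite ?mxE.
Qed.

Lemma blk_square_zero m (rad : rel nat) (E : 'M[R]_(r.+1 * m)) :
    (forall i l j, rad i l -> rad l j -> False) ->
    (forall i j, (i < r.+1)%N -> (j < r.+1)%N -> ~~ rad i j -> blk E i j = 0) ->
  E *m E = 0.
Proof.
move=> no_chain radE; apply: blk_ext => i j ir jr.
rewrite blk_mul blk0 big1 // => l _.
case: (boolP (rad i l)) => [il|nil]; last by rewrite radE ?mul0mx.
rewrite (radE l j) ?mulmx0 //; apply/negP; exact: no_chain il.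
Qed.

End Blocks.

Arguments blk {R r m m'} P i%_N j%_N.

Lemma blk_tensor_act (k : fieldType) r (Phi : Defs.path -> 'M[ncpoly k]_r.+1) m
    (X Y : 'M[k]_m) p i j :
  blk (tensor_act Phi X Y p) i j = ev_nc X Y (Phi p (inord i) (inord j)).
Proof. by apply/matrixP => s t; rewrite !mxE !mxtens_indexK. Qed.

(** * The bimodule *)

Definition blocks_at (v : nat) : seq nat :=
  match v with
  | 1 => [:: 0; 1; 2; 3] | 3 => [:: 4; 5; 6; 7] | 4 => [:: 8; 9; 10] | _ => [::]
  end%N.

Definition vertex_tab (v : nat) : tpencil := scalar_tab [seq (i, i) | i <- blocks_at v].

(* The arrow matrices are only a device for computing the action of paths
   between the vertices 1, 3 and 4; they are not supported at 2 and 5. *)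
Definition arrow_tab (x : arr) : tpencil :=
  match x with
  | Aa 1 => scalar_tab [:: (0, 0); (1, 1)]
  | Aa 2 => TPencil (ntab_of [:: (6, 1); (6, 4); (7, 5)])
                    (ntab_of [:: (7, 0)]) (ntab_of [:: (7, 1)])
  | Aa 3 => scalar_tab [:: (8, 4); (9, 5); (10, 6)]
  | Aa 4 => scalar_tab [:: (10, 8)]
  | Bb 1 => scalar_tab [:: (2, 0); (3, 1); (2, 4); (3, 5)]
  | Bb 2 => scalar_tab [:: (4, 4); (5, 5)]
  | Bb 3 => scalar_tab [:: (6, 8); (7, 9)]
  | Bb 4 => scalar_tab [:: (10, 10)]
  | _ => tpencil0
  end%N.

Definition word_tab (w : seq arr) : tpencil :=
  foldl (fun t x => tpencil_mul 11 (arrow_tab x) t) (tpencil1 11) w.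

Definition path_tab (p : Defs.path) : tpencil :=
  tpencil_mul 11 (word_tab p.2) (vertex_tab p.1).

Definition linear_range_tab : ntab := ntab_of [:: (6, 6); (7, 7); (10, 10)]%N.

Section Bimodule.
Variable k : fieldType.

Definition arrow_pencil (x : arr) : pencil k 11 := tpencil_val k 11 (arrow_tab x).
Definition vertex_pencil (v : nat) : pencil k 11 := tpencil_val k 11 (vertex_tab v).

Definition word_pencil (w : seq arr) : pencil k 11 :=
  foldl (fun t x => pencil_mul (arrow_pencil x) t) (pencil1 k 11) w.

Definition path_pencil (p : Defs.path) : pencil k 11 :=
  pencil_mul (word_pencil p.2) (vertex_pencil p.1).

Definition Phi (p : Defs.path) : 'M[ncpoly k]_11 := pencil_nc (path_pencil p).

Lemma word_pencil_cat u w :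
  word_pencil (u ++ w) = pencil_mul (word_pencil w) (word_pencil u).
Proof.
rewrite /word_pencil foldl_cat; move: (foldl _ _ u) => t.
elim: w t => [|x w IH] t /=; first by rewrite pencil_mul1p.
by rewrite IH [in RHS]IH pencil_mulp1 pencil_mulA.
Qed.

Lemma word_pencil1 x : word_pencil [:: x] = arrow_pencil x.
Proof. exact: pencil_mulp1. Qed.

Lemma word_pencilE w : word_pencil w = tpencil_val k 11 (word_tab w).
Proof.
rewrite /word_pencil /word_tab -tpencil_val1; move: (tpencil1 11) => t.
by elim: w t => [|x w IH] t //=; rewrite /arrow_pencil tpencil_valM IH.
Qed.

Lemma path_pencilE p : path_pencil p = tpencil_val k 11 (path_tab p).
Proof. by rewrite /path_pencil /path_tab -tpencil_valM word_pencilE. Qed.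

Let L : 'M[k]_11 := ntab_mx linear_range_tab.

Lemma linear_range_idem : L *m L = L.
Proof. by rewrite /L ntab_mxM; apply: ntab_eqbP; vm_compute. Qed.

Lemma adapted_path_pencil p : adapted L (path_pencil p).
Proof.
have La x : adapted L (arrow_pencil x).
  by apply: tadaptedP; case: x => [[|[|[|[|[|i]]]]]|[|[|[|[|[|i]]]]]]; vm_compute.
have Lv v : adapted L (vertex_pencil v).
  by apply: tadaptedP; case: v => [|[|[|[|[|v]]]]]; vm_compute.
apply: adapted_mul (Lv _); rewrite /word_pencil.
elim: p.2 (pencil1 k 11) (adapted1 linear_range_idem) => [|x w IH] t Lt //=.
exact/IH/adapted_mul.
Qed.

Let X := [:: 3; 4]%N.

Lemma vertex_pencil_arrow x : tgt x \in 1%N :: X ->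
  pencil_mul (vertex_pencil (tgt x)) (arrow_pencil x) = arrow_pencil x.
Proof.
rewrite /arrow_pencil /vertex_pencil tpencil_valM => Hx; apply: tpencil_eqbP; move: Hx.
by case: x => [[|[|[|[|[|i]]]]]|[|[|[|[|[|i]]]]]] //= _; vm_compute.
Qed.

Lemma vertex_pencil_idem v : v \in 1%N :: X ->
  pencil_mul (vertex_pencil v) (vertex_pencil v) = vertex_pencil v.
Proof.
rewrite /vertex_pencil tpencil_valM => Hv; apply: tpencil_eqbP; move: Hv.
by case: v => [|[|[|[|[|v]]]]] //= _; vm_compute.
Qed.

Lemma vertex_pencil_orth v v' : v \in 1%N :: X -> v' \in 1%N :: X -> v <> v' ->
  pencil_mul (vertex_pencil v) (vertex_pencil v') = pencil0 k 11.
Proof.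
rewrite /vertex_pencil tpencil_valM -(tpencil_val0 k 11).
case: v => [|[|[|[|[|v]]]]] //; case: v' => [|[|[|[|[|v']]]]] //= _ _ vv';
  first [by case: vv' | by apply: tpencil_eqbP; vm_compute].
Qed.

Lemma vertex_pencil_sum :
  pencil_add (vertex_pencil 1) (pencil_add (vertex_pencil 3) (vertex_pencil 4))
  = pencil1 k 11.
Proof.
by rewrite /vertex_pencil !tpencil_valD -tpencil_val1; apply: tpencil_eqbP; vm_compute.
Qed.

Lemma path_pencil_end p : pend p \in 1%N :: X ->
  pencil_mul (vertex_pencil (pend p)) (path_pencil p) = path_pencil p.
Proof.
case: p => v w; rewrite /pend /path_pencil /=; case/lastP: w => [|w x] /=.
  by move=> Xv; rewrite pencil_mul1p vertex_pencil_idem.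
rewrite map_rcons last_rcons -cats1 word_pencil_cat word_pencil1 => Xx.
by rewrite !pencil_mulA vertex_pencil_arrow.
Qed.

Lemma path_pencil_cat p q : pend p \in 1%N :: X -> pend p = pstart q ->
  path_pencil (pcat p q) = pencil_mul (path_pencil q) (path_pencil p).
Proof.
move=> Xp pq.
have -> : path_pencil (pcat p q) = pencil_mul (word_pencil q.2) (path_pencil p).
  by rewrite /path_pencil /pcat /= word_pencil_cat pencil_mulA.
by rewrite -[in LHS](path_pencil_end Xp) pq pencil_mulA.
Qed.

Lemma path_pencil_orth p q : pend p \in 1%N :: X -> pstart q \in 1%N :: X ->
  pend p <> pstart q -> pencil_mul (path_pencil q) (path_pencil p) = pencil0 k 11.
Proof.
move=> Xp Xq pq; rewrite -(path_pencil_end Xp) {1}/path_pencil -pencil_mulA.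
rewrite [M in pencil_mul _ M]pencil_mulA vertex_pencil_orth //; last by move/esym.
by rewrite pencil_mul0p pencil_mulp0.
Qed.

Lemma path_pencil_split s u v w : path_pencil (s, u ++ v ++ w) =
  pencil_mul (pencil_mul (pencil_mul (word_pencil w) (word_pencil v)) (word_pencil u))
    (vertex_pencil s).
Proof. by rewrite /path_pencil /= !word_pencil_cat. Qed.

Lemma word_pencil_comm i : (1 <= i <= 3)%N ->
  word_pencil [:: Bb i; Aa i] = word_pencil [:: Aa i.+1; Bb i.+1].
Proof.
move=> i_range; rewrite !word_pencilE; apply: tpencil_eqbP.
by case: i i_range => [|[|[|[|i]]]] i_range; try discriminate i_range; vm_compute.
Qed.

Lemma word_pencil_zero : word_pencil [:: Bb 4; Aa 4] = pencil0 k 11.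
Proof. by rewrite word_pencilE -(tpencil_val0 k 11); apply: tpencil_eqbP; vm_compute. Qed.

Lemma Phi_rep : is_rep_AnX (@ncmx_eq k 11) (@ncmx_mul k 11) (@ncmx_add k 11)
  (ncmx_zero k 11) (ncmx_one k 11) 5 X Phi.
Proof.
have Phi_mul p q i j w : nccoef (ncmx_mul (Phi q) (Phi p) i j) w =
    pencil_coef (pencil_mul (path_pencil q) (path_pencil p)) w i j.
  by apply: nccoef_pencil_nc_mul; apply: adapted_path_pencil.
split.
- move=> i j w; rewrite /= !nccoef_ncmx_add nccoef_ncmx_zero addr0 !nccoef_pencil_nc.
  rewrite nccoef_ncmx_one -vertex_pencil_sum !pencil_coefD.
  by rewrite /path_pencil /= !pencil_mul1p !mxE.
- move=> p q /andP [_ Xp] _ pq i j w.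
  by rewrite Phi_mul nccoef_pencil_nc path_pencil_cat.
- move=> p q /andP [_ Xp] /andP [/andP [_ Xq] _] pq i j w.
  by rewrite Phi_mul path_pencil_orth // pencil_coef0 nccoef_ncmx_zero mxE.
- by move=> i s u w i_range _; rewrite /Phi !path_pencil_split (word_pencil_comm i_range).
- move=> s u w _ i j w'; rewrite /Phi nccoef_pencil_nc nccoef_ncmx_zero.
  by rewrite path_pencil_split word_pencil_zero pencil_mulp0 !pencil_mul0p pencil_coef0 mxE.
Qed.

End Bimodule.

(** * Homomorphisms between induced modules *)

Lemma blk_tensor_tab (k : fieldType) m (X Y : 'M[k]_m) p x i j :
    tpencil_eqb 11 (path_tab p) x -> (i < 11)%N -> (j < 11)%N ->
  blk (tensor_act (Phi k) X Y p) i j =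
  (tc x i j)%:R *: 1%:M + (tx x i j)%:R *: X + (ty x i j)%:R *: Y.
Proof.
move=> px ir jr; rewrite blk_tensor_act /Phi ev_pencil_nc path_pencilE.
by rewrite (tpencil_eqbP k px) !mxE !inordK.
Qed.

Definition support_ok (s : seq (nat * nat)) : bool :=
  uniq s && all (fun x => (x.1 < 11) && (x.2 < 11))%N s.

Definition path_supports (p : Defs.path) (c a b : seq (nat * nat)) : bool :=
  [&& Spath 5 [:: 3; 4] p,
      tpencil_eqb 11 (path_tab p) (TPencil (ntab_of c) (ntab_of a) (ntab_of b))
    & all support_ok [:: c; a; b]]%N.

Definition row_vertex (i : nat) : nat := (if i < 4 then 1 else if i < 8 then 3 else 4)%N.

Lemma mem_blocks_at i v : (i < 11)%N -> (i \in blocks_at v) = (row_vertex i == v).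
Proof.
by case: i => [|[|[|[|[|[|[|[|[|[|[|i]]]]]]]]]]] //; case: v => [|[|[|[|[|v]]]]].
Qed.

(* The block positions an endomorphism of the induced modules may occupy besides
   its scalar diagonal. *)
Definition radical_pos (i j : nat) : bool :=
  [|| (i \in [:: 2; 3]) && (j \in [:: 0; 1]), (i \in [:: 6; 7]) && (j \in [:: 4; 5])
    | (i == 10) && (j \in [:: 8; 9])]%N.

Lemma radical_pos_no_chain i l j : radical_pos i l -> radical_pos l j -> False.
Proof.
by case: l => [|[|[|[|[|[|[|[|[|[|[|l]]]]]]]]]]]; rewrite /radical_pos /= ?andbF ?orbF.
Qed.

Section TensorBlocks.
Variables (k : fieldType) (p : Defs.path) (c a b : seq (nat * nat)).
Hypotheses (p_tab : tpencil_eqb 11 (path_tab p) (TPencil (ntab_of c) (ntab_of a) (ntab_of b)))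
  (cab_ok : all support_ok [:: c; a; b]).

Let support_okP s : support_ok s ->
  [/\ uniq s, all (fun x => x.1 < 11)%N s & all (fun x => x.2 < 11)%N s].
Proof. by case/andP=> -> /allP sl; split => //; apply/allP => x /sl /andP []. Qed.

Lemma blk_mul_tensor_act m0 m1 (M : 'M[k]_(11 * m1, 11 * m0)) (X Y : 'M[k]_m0) i j :
    (i < 11)%N -> (j < 11)%N ->
  blk (M *m tensor_act (Phi k) X Y p) i j =
  \sum_(x <- c | x.2 == j) blk M i x.1 + \sum_(x <- a | x.2 == j) blk M i x.1 *m X
    + \sum_(x <- b | x.2 == j) blk M i x.1 *m Y.
Proof.
move=> ir jr; rewrite blk_mul.
under eq_bigr => l _ do rewrite (blk_tensor_tab _ _ p_tab) //= !mulmxDr -!scalemxAr mulmx1.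
case/and4P: cab_ok => /support_okP [? ? _] /support_okP [? ? _] /support_okP [? ? _] _.
rewrite !big_split /= (sum_ntab_of_col (blk M i)) //.
rewrite (sum_ntab_of_col (fun l => blk M i l *m X)) //.
by rewrite (sum_ntab_of_col (fun l => blk M i l *m Y)).
Qed.

Lemma tensor_act_mul_blk m0 m1 (M : 'M[k]_(11 * m0, 11 * m1)) (X Y : 'M[k]_m0) i j :
    (i < 11)%N -> (j < 11)%N ->
  blk (tensor_act (Phi k) X Y p *m M) i j =
  \sum_(x <- c | x.1 == i) blk M x.2 j + \sum_(x <- a | x.1 == i) X *m blk M x.2 j
    + \sum_(x <- b | x.1 == i) Y *m blk M x.2 j.
Proof.
move=> ir jr; rewrite blk_mul.
under eq_bigr => l _ do rewrite (blk_tensor_tab _ _ p_tab) //= !mulmxDl -!scalemxAl mul1mx.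
case/and4P: cab_ok => /support_okP [? _ ?] /support_okP [? _ ?] /support_okP [? _ ?] _.
rewrite !big_split /= (sum_ntab_of_row (blk M ^~ j)) //.
rewrite (sum_ntab_of_row (fun l => X *m blk M l j)) //.
by rewrite (sum_ntab_of_row (fun l => Y *m blk M l j)).
Qed.

End TensorBlocks.

(* Paths are named in the right-to-left notation of the paper. *)
Fact supports_b1a1 : path_supports (1, [:: Aa 1; Bb 1]) [:: (2, 0); (3, 1)] [::] [::].
Proof. by vm_compute. Qed.
Fact supports_b1b2 : path_supports (3, [:: Bb 2; Bb 1]) [:: (2, 4); (3, 5)] [::] [::].
Proof. by vm_compute. Qed.
Fact supports_b3a3 : path_supports (3, [:: Aa 3; Bb 3]) [:: (6, 4); (7, 5)] [::] [::].
Proof. by vm_compute. Qed.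
Fact supports_b3 : path_supports (4, [:: Bb 3]) [:: (6, 8); (7, 9)] [::] [::].
Proof. by vm_compute. Qed.
Fact supports_a3 : path_supports (3, [:: Aa 3]) [:: (8, 4); (9, 5); (10, 6)] [::] [::].
Proof. by vm_compute. Qed.
Fact supports_a3a2a1 : path_supports (1, [:: Aa 1; Aa 2; Aa 3]) [:: (10, 1)] [::] [::].
Proof. by vm_compute. Qed.
Fact supports_a3b3a3 : path_supports (3, [:: Aa 3; Bb 3; Aa 3]) [:: (10, 4)] [::] [::].
Proof. by vm_compute. Qed.
Fact supports_a2a1 :
  path_supports (1, [:: Aa 1; Aa 2]) [:: (6, 1)] [:: (7, 0)] [:: (7, 1)].
Proof. by vm_compute. Qed.

Section Intertwiners.
Variables (k : fieldType) (m m' : nat) (X0 Y0 : 'M[k]_m) (X1 Y1 : 'M[k]_m').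
Variable P : 'M[k]_(11 * m', 11 * m).
Hypothesis P_hom : forall p, Spath 5 [:: 3; 4]%N p ->
  P *m tensor_act (Phi k) X0 Y0 p = tensor_act (Phi k) X1 Y1 p *m P.

Lemma intertwine_blk p c a b : path_supports p c a b ->
  forall i j, (i < 11)%N -> (j < 11)%N ->
  \sum_(x <- c | x.2 == j) blk P i x.1 + \sum_(x <- a | x.2 == j) blk P i x.1 *m X0
    + \sum_(x <- b | x.2 == j) blk P i x.1 *m Y0
  = \sum_(x <- c | x.1 == i) blk P x.2 j + \sum_(x <- a | x.1 == i) X1 *m blk P x.2 j
    + \sum_(x <- b | x.1 == i) Y1 *m blk P x.2 j.
Proof.
case/and3P => Sp p_tab cab_ok i j ir jr.
have := congr1 (fun M => blk M i j) (P_hom Sp).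
by rewrite /= (blk_mul_tensor_act p_tab) // (tensor_act_mul_blk p_tab).
Qed.

Lemma blk_vertex_zero v i j : v \in [:: 1; 3; 4]%N -> (i < 11)%N -> (j < 11)%N ->
  (i \in blocks_at v) != (j \in blocks_at v) -> blk P i j = 0.
Proof.
move=> Xv ir jr ij.
have supp : path_supports (v, [::]) [seq (l, l) | l <- blocks_at v] [::] [::].
  by move: Xv; case: (v) => [|[|[|[|[|?]]]]] //= _; vm_compute.
have uv w : uniq (blocks_at w) by case: w => [|[|[|[|[|?]]]]].
have := intertwine_blk supp ir jr; rewrite !big_nil !addr0 !big_map /=.
by rewrite !big_pred1_uniq //; case: (j \in _) (i \in _) ij => [] [] //= _ ->.
Qed.

Lemma blk_cross_vertex i j : (i < 11)%N -> (j < 11)%N ->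
  row_vertex i != row_vertex j -> blk P i j = 0.
Proof.
move=> ir jr ij; have Xi : row_vertex i \in [:: 1; 3; 4]%N.
  by rewrite /row_vertex; case: ifP => // _; case: ifP.
apply: (blk_vertex_zero Xi ir jr).
by rewrite !mem_blocks_at // eqxx [row_vertex j == _]eq_sym (negbTE ij).
Qed.

Let E_b1a1 := intertwine_blk supports_b1a1.
Let E_b1b2 := intertwine_blk supports_b1b2.
Let E_b3a3 := intertwine_blk supports_b3a3.
Let E_b3 := intertwine_blk supports_b3.
Let E_a3 := intertwine_blk supports_a3.
Let E_a3a2a1 := intertwine_blk supports_a3a2a1.
Let E_a3b3a3 := intertwine_blk supports_a3b3a3.
Let E_a2a1 := intertwine_blk supports_a2a1.

Local Open Scope nat_scope.

Ltac blk_eqn E i j :=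
  move: (E i j erefl erefl); rewrite /= ?big_cons ?big_nil /= ?addr0 ?add0r.
Ltac solve_blk := first [by move=> -> | by move=> <- | done].

Lemma blk_diag i : i < 11 -> blk P i i = blk P 0 0.
Proof.
have b22 : blk P 2 2 = blk P 0 0 by blk_eqn E_b1a1 2 0; solve_blk.
have b44 : blk P 4 4 = blk P 0 0 by blk_eqn E_b1b2 2 4; rewrite b22; solve_blk.
have b66 : blk P 6 6 = blk P 0 0 by blk_eqn E_b3a3 6 4; rewrite b44; solve_blk.
have b88 : blk P 8 8 = blk P 0 0 by blk_eqn E_b3 6 8; rewrite b66; solve_blk.
have b1010 : blk P 10 10 = blk P 0 0 by blk_eqn E_a3 10 6; rewrite b66; solve_blk.
have b11 : blk P 1 1 = blk P 0 0 by blk_eqn E_a3a2a1 10 1; rewrite b1010; solve_blk.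
have b33 : blk P 3 3 = blk P 0 0 by blk_eqn E_b1a1 3 1; rewrite b11; solve_blk.
have b55 : blk P 5 5 = blk P 0 0 by blk_eqn E_b1b2 3 5; rewrite b33; solve_blk.
have b77 : blk P 7 7 = blk P 0 0 by blk_eqn E_b3a3 7 5; rewrite b55; solve_blk.
have b99 : blk P 9 9 = blk P 0 0 by blk_eqn E_b3 7 9; rewrite b77; solve_blk.
by case: i => [|[|[|[|[|[|[|[|[|[|[|i]]]]]]]]]]].
Qed.

Lemma blk_offdiag i j : i < 11 -> j < 11 -> i != j -> ~~ radical_pos i j ->
  blk P i j = 0%R.
Proof.
move=> ir jr; case: (eqVneq (row_vertex i) (row_vertex j)) => [same|]; last first.
  by move=> ij _ _; apply: blk_cross_vertex.
have b45 : blk P 4 5 = 0%R by blk_eqn E_a3b3a3 10 5; solve_blk.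
have b10 : blk P 1 0 = 0%R by blk_eqn E_a3a2a1 10 0; solve_blk.
have b23 : blk P 2 3 = 0%R by blk_eqn E_b1b2 2 5; rewrite b45; solve_blk.
have b01 : blk P 0 1 = 0%R by blk_eqn E_b1a1 2 1; rewrite b23; solve_blk.
have b32 : blk P 3 2 = 0%R by blk_eqn E_b1a1 3 0; rewrite b10; solve_blk.
have b54 : blk P 5 4 = 0%R by blk_eqn E_b1b2 3 4; rewrite b32; solve_blk.
have b67 : blk P 6 7 = 0%R by blk_eqn E_b3a3 6 5; rewrite b45; solve_blk.
have b76 : blk P 7 6 = 0%R by blk_eqn E_b3a3 7 4; rewrite b54; solve_blk.
have b89 : blk P 8 9 = 0%R by blk_eqn E_a3 8 5; rewrite b45; solve_blk.
have b98 : blk P 9 8 = 0%R by blk_eqn E_a3 9 4; rewrite b54; solve_blk.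
have b02 : blk P 0 2 = 0%R by blk_eqn E_b1a1 0 0; solve_blk.
have b03 : blk P 0 3 = 0%R by blk_eqn E_b1a1 0 1; solve_blk.
have b12 : blk P 1 2 = 0%R by blk_eqn E_b1a1 1 0; solve_blk.
have b13 : blk P 1 3 = 0%R by blk_eqn E_b1a1 1 1; solve_blk.
have b46 : blk P 4 6 = 0%R by blk_eqn E_b3a3 4 4; solve_blk.
have b47 : blk P 4 7 = 0%R by blk_eqn E_b3a3 4 5; solve_blk.
have b56 : blk P 5 6 = 0%R by blk_eqn E_b3a3 5 4; solve_blk.
have b57 : blk P 5 7 = 0%R by blk_eqn E_b3a3 5 5; solve_blk.
have b810 : blk P 8 10 = 0%R by blk_eqn E_a3 8 6; rewrite b46; solve_blk.
have b910 : blk P 9 10 = 0%R by blk_eqn E_a3 9 6; rewrite b56; solve_blk.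
move: ir jr same.
by case: i => [|[|[|[|[|[|[|[|[|[|[|i]]]]]]]]]]];
  case: j => [|[|[|[|[|[|[|[|[|[|[|j]]]]]]]]]]].
Qed.

Lemma blk00_commute :
  blk P 0 0 *m X0 = X1 *m blk P 0 0 /\ blk P 0 0 *m Y0 = Y1 *m blk P 0 0.
Proof.
split.
  blk_eqn E_a2a1 7 0; rewrite blk_diag // (blk_offdiag (i := 1) (j := 0)) //.
  by rewrite mulmx0 addr0.
blk_eqn E_a2a1 7 1; rewrite (blk_offdiag (i := 7) (j := 6)) //.
by rewrite (blk_offdiag (i := 0) (j := 1)) // !blk_diag // mulmx0 !add0r.
Qed.

Lemma blk_scalar_form i j : i < 11 -> j < 11 -> ~~ radical_pos i j ->
  blk P i j = if i == j then blk P 0 0 else 0%R.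
Proof.
by move=> ir jr nrad; case: eqP => [<-|/eqP ij]; [apply: blk_diag | apply: blk_offdiag].
Qed.

Lemma blk_row0_mul c (N : nat -> 'M[k]_(m, c)) :
  (\sum_(l < 11) blk P 0 l *m N l = blk P 0 0 *m N 0)%R.
Proof.
rewrite big_ord_recl big1 ?addr0 // => l _.
by rewrite blk_offdiag ?mul0mx.
Qed.

End Intertwiners.

Section Wildness.
Variable k : fieldType.

Lemma Phi_indec m (X Y : 'M[k]_m) :
  kxy_indec X Y -> mod_indec 5 [:: 3; 4]%N (tensor_act (Phi k) X Y).
Proof.
case=> m_gt0 indec; split=> [|E E_hom E_idem]; first by rewrite muln_gt0.
have [EX EY] := blk00_commute E_hom.
have E00_idem : blk E 0 0 *m blk E 0 0 = blk E 0 0.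
  by rewrite -[in RHS]E_idem blk_mul (blk_row0_mul E_hom (fun l => blk E l 0)).
have [E00|E00] := indec _ EX EY E00_idem; [left | right].
  rewrite -E_idem; apply: (blk_square_zero radical_pos_no_chain) => i j ir jr nrad.
  by rewrite (blk_scalar_form E_hom) // E00 if_same.
apply/eqP; rewrite -subr_eq0 -oppr_eq0 opprB; apply/eqP.
have idem_compl : (1%:M - E) *m (1%:M - E) = 1%:M - E.
  by rewrite mulmxBl mul1mx mulmxBr mulmx1 E_idem subrr subr0.
rewrite -idem_compl; apply: (blk_square_zero radical_pos_no_chain) => i j ir jr nrad.
by rewrite blkB (blk_scalar_form E_hom) // E00 blk1 //; case: (i == j); rewrite subrr.
Qed.

Lemma Phi_reflects_iso m m' (X0 Y0 : 'M[k]_m) (X1 Y1 : 'M[k]_m') :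
  mod_iso 5 [:: 3; 4]%N (tensor_act (Phi k) X0 Y0) (tensor_act (Phi k) X1 Y1) ->
  kxy_iso X0 Y0 X1 Y1.
Proof.
case=> P [Q [PQ QP P_hom]].
have Q_hom p : Spath 5 [:: 3; 4]%N p ->
    Q *m tensor_act (Phi k) X1 Y1 p = tensor_act (Phi k) X0 Y0 p *m Q.
  move=> Sp; rewrite -[LHS]mulmx1 -PQ !mulmxA -[Q *m _ *m P]mulmxA -(P_hom p Sp).
  by rewrite !mulmxA QP mul1mx.
have [PX PY] := blk00_commute P_hom.
exists (blk P 0 0), (blk Q 0 0); split => //.
  have := congr1 (fun M => blk M 0 0) PQ.
  by rewrite /= blk_mul blk1 // (blk_row0_mul P_hom (fun l => blk Q l 0)).
have := congr1 (fun M => blk M 0 0) QP.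
by rewrite /= blk_mul blk1 // (blk_row0_mul Q_hom (fun l => blk P l 0)).
Qed.

End Wildness.

Theorem lemma4 (k : closedFieldType) : wild_AnX k 5 [:: 3%N; 4%N].
Proof.
exists 11%N, (Phi k); split; first exact: Phi_rep.
- exact: Phi_indec.
- exact: Phi_reflects_iso.
Qed.
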